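(* Let $X$ be a countably infinite set and $W=W_F$. Let $\succeq$ be a preorder on $W_F$ satisfying Strong Pareto, Permutation Invariance, and Quasi-Independence. If $w,v\in W_F$ are such that $Z=\{x\in X: w(x)\neq v(x)\}$ is finite and $w\succeq v$, then $\sum_{x\in Z}(w(x)-v(x))\ge 0$.
   Context: $W_F$ is the set of functions $X\to\mathbb R$ with finite range; addition and scalar multiplication are pointwise. For a preorder $\succeq$, $w\succ v$ means $w\succeq v$ and not $v\succeq w$. For a permutation $\pi$ of $X$, $\pi(w)(x)=w(\pi(x))$. Strong Pareto: for all $w,v\in W$, if $w(x)\ge v(x)$ for all $x$ and $w(x)>v(x)$ for some $x$, then $w\succ v$. Permutation Invariance: for all $w,v\in W$ and every permutation $\pi$ of $X$, $w\succeq v$ iff $\pi(w)\succeq\pi(v)$. Quasi-Independence: for all $w,v,u\in W$, if $w\succeq v$ then for every $\alpha\in[0,1]$, $\alpha w+(1-\alpha)u\succeq \alpha v+(1-\alpha)u$. *)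

From Stdlib Require Import Reals List.
Import ListNotations.
Open Scope R_scope.

Definition countably_infinite (X : Type) : Prop :=
  exists (f : nat -> X) (g : X -> nat),
    (forall n, g (f n) = n) /\ (forall x, f (g x) = x).

Definition in_WF {X : Type} (w : X -> R) : Prop :=
  exists l : list R, forall x, In (w x) l.

Definition is_perm {X : Type} (pi : X -> X) : Prop :=
  exists pinv : X -> X, (forall x, pinv (pi x) = x) /\ (forall x, pi (pinv x) = x).

Definition perm_act {X : Type} (pi : X -> X) (w : X -> R) : X -> R :=
  fun x => w (pi x).

(* A relation on X -> R, considered only on W_F. *)
Definition strictly {X : Type} (ge : (X -> R) -> (X -> R) -> Prop) w v : Prop :=
  ge w v /\ ~ ge v w.

Definition preorder_on_WF {X : Type} (ge : (X -> R) -> (X -> R) -> Prop) : Prop :=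
  (forall w, in_WF w -> ge w w) /\
  (forall w v u, in_WF w -> in_WF v -> in_WF u -> ge w v -> ge v u -> ge w u).

Definition strong_pareto {X : Type} (ge : (X -> R) -> (X -> R) -> Prop) : Prop :=
  forall w v, in_WF w -> in_WF v ->
    (forall x, w x >= v x) -> (exists x, w x > v x) -> strictly ge w v.

Definition permutation_invariance {X : Type} (ge : (X -> R) -> (X -> R) -> Prop) : Prop :=
  forall w v pi, in_WF w -> in_WF v -> is_perm pi ->
    (ge w v <-> ge (perm_act pi w) (perm_act pi v)).

Definition quasi_independence {X : Type} (ge : (X -> R) -> (X -> R) -> Prop) : Prop :=
  forall w v u, in_WF w -> in_WF v -> in_WF u -> ge w v ->
    forall alpha, 0 <= alpha <= 1 ->
      ge (fun x => alpha * w x + (1 - alpha) * u x)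
         (fun x => alpha * v x + (1 - alpha) * u x).

Definition diff_sum {X : Type} (w v : X -> R) (l : list X) : R :=
  fold_right (fun x acc => (w x - v x) + acc) 0 l.

From Stdlib Require Import Reals List Lra Lia ClassicalEpsilon FunctionalExtensionality.
Import ListNotations.
Open Scope R_scope.

(** Let [s] be the cyclic permutation of [Z] and average the [n = |Z|]
    rotated profiles [w o s^k] and [v o s^k].  Permutation invariance gives
    [w o s^k ⪰ v o s^k] for every [k], and quasi-independence (applied as a
    sequence of mixtures) transfers this to the averages [A ⪰ B].  Off [Z] both
    averages equal [w = v]; on [Z] each average is constant, equal to the mean
    of [w] (resp. [v]) over [Z].  So if [sum_Z (w - v) < 0], then [B] strictly
    Pareto dominates [A], contradicting [A ⪰ B]. *)

Definition lsum {A : Type} (f : A -> R) (l : list A) : R :=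
  fold_right (fun x acc => f x + acc) 0 l.

Section ListSums.
Variable A : Type.

Lemma lsum_ext (f g : A -> R) (l : list A) :
  (forall x, In x l -> f x = g x) -> lsum f l = lsum g l.
Proof.
  induction l as [|y l IH]; intro H; simpl; [reflexivity|].
  rewrite H by (left; reflexivity). rewrite IH; [reflexivity|].
  intros x Hx. apply H. right. exact Hx.
Qed.

Lemma lsum_app (f : A -> R) (l1 l2 : list A) :
  lsum f (l1 ++ l2) = lsum f l1 + lsum f l2.
Proof. induction l1 as [|y l1 IH]; simpl; [ring|]. rewrite IH; ring. Qed.

Lemma lsum_minus (f g : A -> R) (l : list A) :
  lsum (fun x => f x - g x) l = lsum f l - lsum g l.
Proof. induction l as [|y l IH]; simpl; [ring|]. rewrite IH; ring. Qed.

Lemma lsum_map {B : Type} (f : B -> R) (g : A -> B) (l : list A) :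
  lsum f (map g l) = lsum (fun x => f (g x)) l.
Proof. induction l as [|y l IH]; simpl; [reflexivity|]. rewrite IH; reflexivity. Qed.

Lemma lsum_const (c : R) (l : list A) : lsum (fun _ => c) l = INR (length l) * c.
Proof.
  induction l as [|y l IH]; simpl lsum; [simpl; ring|].
  rewrite IH, length_cons, S_INR. ring.
Qed.

End ListSums.

Lemma diff_sum_lsum {X : Type} (w v : X -> R) (l : list X) :
  diff_sum w v l = lsum w l - lsum v l.
Proof. apply lsum_minus. Qed.

Lemma lsum_seq_rotate (g : nat -> R) (n : nat) :
  g n = g 0%nat -> lsum (fun k => g (S k)) (seq 0 n) = lsum g (seq 0 n).
Proof.
  intro Hg. destruct n as [|m]; [reflexivity|].
  rewrite <- lsum_map, seq_shift, seq_S, lsum_app. simpl. rewrite Hg. ring.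
Qed.

Lemma iter_fixed {A : Type} (f : A -> A) (x : A) (k : nat) :
  f x = x -> Nat.iter k f x = x.
Proof. intro Hx. induction k as [|k IH]; simpl; [reflexivity|]. rewrite IH; exact Hx. Qed.

Lemma is_perm_iter {X : Type} (f : X -> X) (k : nat) :
  is_perm f -> is_perm (Nat.iter k f).
Proof.
  intros [g [Hgf Hfg]]. exists (Nat.iter k g). split; intro x.
  - induction k as [|k IH]; [reflexivity|].
    rewrite (Nat.iter_succ_r k _ g), (Nat.iter_succ k _ f), Hgf. exact IH.
  - induction k as [|k IH]; [reflexivity|].
    rewrite (Nat.iter_succ_r k _ f), (Nat.iter_succ k _ g), Hfg. exact IH.
Qed.

Section FiniteRange.
Variable X : Type.

Lemma in_WF_const (c : R) : in_WF (fun _ : X => c).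
Proof. exists [c]. simpl; auto. Qed.

Lemma in_WF_lift2 (h : R -> R -> R) (f g : X -> R) :
  in_WF f -> in_WF g -> in_WF (fun x => h (f x) (g x)).
Proof.
  intros [lf Hf] [lg Hg]. exists (map (fun p => h (fst p) (snd p)) (list_prod lf lg)).
  intro x. apply (in_map (fun p => h (fst p) (snd p)) _ (f x, g x)), in_prod; auto.
Qed.

Lemma in_WF_perm_act (pi : X -> X) (f : X -> R) : in_WF f -> in_WF (perm_act pi f).
Proof. intros [l Hl]. exists l. intro x. apply Hl. Qed.

Lemma in_WF_lsum {A : Type} (a : A -> X -> R) (l : list A) :
  (forall k, in_WF (a k)) -> in_WF (fun x => lsum (fun k => a k x) l).
Proof.
  intro Ha. induction l as [|k l IH]; simpl.
  - apply in_WF_const.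
  - exact (in_WF_lift2 Rplus _ _ (Ha k) IH).
Qed.

End FiniteRange.

Section Means.
Variable X : Type.

Definition mean (m : nat) (a : nat -> X -> R) : X -> R :=
  fun x => lsum (fun k => a k x) (seq 0 m) / INR m.

Lemma in_WF_mean (m : nat) (a : nat -> X -> R) :
  (forall k, in_WF (a k)) -> in_WF (mean m a).
Proof.
  intro Ha. apply (in_WF_lift2 X Rdiv); [apply in_WF_lsum, Ha | apply in_WF_const].
Qed.

Lemma mean_1 (a : nat -> X -> R) : mean 1 a = a 0%nat.
Proof. extensionality x. unfold mean; simpl. field. Qed.

Lemma mean_S (m : nat) (a : nat -> X -> R) : (0 < m)%nat ->
  mean (S m) a = (fun x => / INR (S m) * a m x + (1 - / INR (S m)) * mean m a x).
Proof.
  intro Hm. extensionality x. unfold mean.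
  rewrite seq_S, lsum_app. simpl lsum.
  assert (0 < INR m) by (apply lt_0_INR; exact Hm).
  rewrite S_INR. field. lra.
Qed.

End Means.

Section Mixtures.
Variables (X : Type) (ge : (X -> R) -> (X -> R) -> Prop).
Hypotheses (Hpre : preorder_on_WF ge) (HQI : quasi_independence ge).

Lemma ge_mix (w v w' v' : X -> R) (alpha : R) :
  in_WF w -> in_WF v -> in_WF w' -> in_WF v' ->
  ge w v -> ge w' v' -> 0 <= alpha <= 1 ->
  ge (fun x => alpha * w x + (1 - alpha) * w' x)
     (fun x => alpha * v x + (1 - alpha) * v' x).
Proof.
  intros Hw Hv Hw' Hv' Hwv Hwv' Ha.
  set (mix f g := fun x : X => alpha * f x + (1 - alpha) * g x).
  assert (Hmix : forall f g, in_WF f -> in_WF g -> in_WF (mix f g))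
    by (intros f g Hf Hg; exact (in_WF_lift2 X (fun a b => alpha * a + (1 - alpha) * b) f g Hf Hg)).
  change (ge (mix w w') (mix v v')).
  apply (proj2 Hpre _ (mix v w') _); auto.
  - apply HQI; auto.
  - replace (mix v w') with (fun x => (1 - alpha) * w' x + (1 - (1 - alpha)) * v x)
      by (extensionality x; unfold mix; ring).
    replace (mix v v') with (fun x => (1 - alpha) * v' x + (1 - (1 - alpha)) * v x)
      by (extensionality x; unfold mix; ring).
    apply HQI; auto. lra.
Qed.

Lemma ge_mean (m : nat) (a b : nat -> X -> R) :
  (forall k, in_WF (a k)) -> (forall k, in_WF (b k)) -> (forall k, ge (a k) (b k)) ->
  ge (mean X (S m) a) (mean X (S m) b).
Proof.
  intros Ha Hb Hab. induction m as [|m IH].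
  - rewrite !mean_1. apply Hab.
  - rewrite !(mean_S X (S m)) by lia.
    assert (0 < INR (S (S m))) by (apply lt_0_INR; lia).
    assert (/ INR (S (S m)) <= 1).
    { rewrite <- Rinv_1. apply Rinv_le_contravar; [lra|]. rewrite !S_INR.
      pose proof (pos_INR m). lra. }
    apply ge_mix; try apply in_WF_mean; auto.
    split; [apply Rlt_le, Rinv_0_lt_compat|]; assumption.
Qed.

End Mixtures.

Section Orbits.
Variables (X : Type) (s : X -> X) (n : nat).
Hypotheses (Hn : (0 < n)%nat) (Hperiod : forall x, Nat.iter n s x = x).

Lemma is_perm_of_period : is_perm s.
Proof.
  exists (Nat.iter (pred n) s).
  split; intro x.
  - rewrite <- Nat.iter_succ_r, (Nat.succ_pred_pos n Hn). apply Hperiod.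
  - rewrite <- Nat.iter_succ, (Nat.succ_pred_pos n Hn). apply Hperiod.
Qed.

Definition orbit_mean (f : X -> R) : X -> R :=
  mean X n (fun k => perm_act (Nat.iter k s) f).

Lemma orbit_mean_fixed (f : X -> R) (x : X) : s x = x -> orbit_mean f x = f x.
Proof.
  intro Hx. unfold orbit_mean, mean, perm_act.
  rewrite (lsum_ext _ _ (fun _ => f x)) by (intros k _; rewrite iter_fixed; auto).
  rewrite lsum_const, length_seq. field. apply not_0_INR. lia.
Qed.

Lemma orbit_mean_iter (f : X -> R) (x : X) (i : nat) :
  orbit_mean f (Nat.iter i s x) = orbit_mean f x.
Proof.
  induction i as [|i IH]; [reflexivity|]. rewrite <- IH.
  unfold orbit_mean, mean, perm_act. f_equal.
  rewrite (lsum_ext _ _ (fun k => f (Nat.iter (S k) s (Nat.iter i s x))))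
    by (intros k _; rewrite Nat.iter_succ, Nat.iter_succ_r; reflexivity).
  apply (lsum_seq_rotate (fun k => f (Nat.iter k s (Nat.iter i s x)))).
  rewrite Hperiod. reflexivity.
Qed.

Lemma ge_orbit_mean (ge : (X -> R) -> (X -> R) -> Prop) (w v : X -> R) :
  preorder_on_WF ge -> permutation_invariance ge -> quasi_independence ge ->
  in_WF w -> in_WF v -> ge w v -> ge (orbit_mean w) (orbit_mean v).
Proof.
  intros Hpre HPI HQI Hw Hv Hwv. unfold orbit_mean.
  rewrite <- (Nat.succ_pred_pos n Hn).
  apply ge_mean; auto; intro k; try (apply in_WF_perm_act; assumption).
  apply HPI; auto. apply is_perm_iter, is_perm_of_period.
Qed.

End Orbits.

Section Cycles.
Variable X : Type.

Definition classic_eq_dec (x y : X) : {x = y} + {x <> y} :=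
  excluded_middle_informative (x = y).

(** [cycle_next z0 l] sends each element of [l] to the next one and the last
    one to [z0] (the default of [hd]); it fixes every point outside [l]. *)
Fixpoint cycle_next (z0 : X) (l : list X) (x : X) : X :=
  match l with
  | [] => x
  | y :: l' => if classic_eq_dec x y then hd z0 l' else cycle_next z0 l' x
  end.

Lemma cycle_next_notin (z0 : X) (l : list X) (x : X) :
  ~ In x l -> cycle_next z0 l x = x.
Proof.
  induction l as [|y l IH]; intro Hx; simpl; [reflexivity|].
  destruct (classic_eq_dec x y) as [->|_]; [exfalso; apply Hx; left; reflexivity|].
  apply IH. intro H. apply Hx. right. exact H.
Qed.

Lemma cycle_next_nth (z0 : X) (l : list X) (i : nat) :
  NoDup l -> (i < length l)%nat -> cycle_next z0 l (nth i l z0) = nth (S i) l z0.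
Proof.
  revert i. induction l as [|y l IH]; intros i Hnd Hi; simpl in Hi; [lia|].
  apply NoDup_cons_iff in Hnd as [Hy Hnd].
  destruct i as [|i]; simpl.
  - destruct (classic_eq_dec y y) as [_|Hne]; [|contradiction].
    destruct l; reflexivity.
  - destruct (classic_eq_dec (nth i l z0) y) as [He|_].
    + exfalso. apply Hy. rewrite <- He. apply nth_In. lia.
    + apply IH; [exact Hnd | lia].
Qed.

Lemma iter_cycle_next (z0 : X) (r : list X) (i : nat) :
  NoDup (z0 :: r) -> (i <= length (z0 :: r))%nat ->
  Nat.iter i (cycle_next z0 (z0 :: r)) z0 = nth i (z0 :: r) z0.
Proof.
  intros Hnd Hi. induction i as [|i IH]; [reflexivity|].
  rewrite Nat.iter_succ, IH by lia. apply cycle_next_nth; [exact Hnd | lia].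
Qed.

Lemma cycle_next_orbit (z0 : X) (r : list X) : NoDup (z0 :: r) ->
  z0 :: r = map (fun i => Nat.iter i (cycle_next z0 (z0 :: r)) z0) (seq 0 (length (z0 :: r))).
Proof.
  intro Hnd. apply (nth_ext _ _ z0 z0); [rewrite length_map, length_seq; reflexivity|].
  intros i Hi. set (g := fun j => Nat.iter j (cycle_next z0 (z0 :: r)) z0).
  rewrite (nth_indep (map g (seq 0 (length (z0 :: r)))) z0 (g 0%nat))
    by (rewrite length_map, length_seq; exact Hi).
  rewrite map_nth, seq_nth by exact Hi. unfold g. simpl plus.
  symmetry. apply iter_cycle_next; [exact Hnd | lia].
Qed.

Lemma cycle_next_period (z0 : X) (r : list X) : NoDup (z0 :: r) ->
  forall x, Nat.iter (length (z0 :: r)) (cycle_next z0 (z0 :: r)) x = x.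
Proof.
  intros Hnd x.
  destruct (classic (In x (z0 :: r))) as [Hx|Hx].
  - rewrite (cycle_next_orbit z0 r Hnd) in Hx.
    apply in_map_iff in Hx as [i [<- _]].
    rewrite <- Nat.iter_add, Nat.add_comm, Nat.iter_add. f_equal.
    rewrite iter_cycle_next by auto. apply nth_overflow. lia.
  - apply iter_fixed, cycle_next_notin, Hx.
Qed.

Lemma orbit_mean_cycle (z0 : X) (r : list X) (f : X -> R) (x : X) :
  NoDup (z0 :: r) -> In x (z0 :: r) ->
  orbit_mean X (cycle_next z0 (z0 :: r)) (length (z0 :: r)) f x
  = lsum f (z0 :: r) / INR (length (z0 :: r)).
Proof.
  intros Hnd Hx. pose proof (cycle_next_orbit z0 r Hnd) as Horbit.
  rewrite Horbit in Hx. apply in_map_iff in Hx as [i [<- _]].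
  rewrite orbit_mean_iter by apply cycle_next_period, Hnd.
  unfold orbit_mean, mean, perm_act. f_equal.
  rewrite <- (lsum_map nat f (fun k => Nat.iter k (cycle_next z0 (z0 :: r)) z0)).
  rewrite <- Horbit. reflexivity.
Qed.

End Cycles.

Theorem lemma1 (X : Type) (HX : countably_infinite X)
  (ge : (X -> R) -> (X -> R) -> Prop)
  (Hpre : preorder_on_WF ge) (HSP : strong_pareto ge)
  (HPI : permutation_invariance ge) (HQI : quasi_independence ge)
  (w v : X -> R) (Hw : in_WF w) (Hv : in_WF v)
  (Z : list X) (HZnd : NoDup Z) (HZ : forall x, In x Z <-> w x <> v x)
  (Hwv : ge w v) :
  diff_sum w v Z >= 0.
Proof.
  destruct Z as [|z0 r]; [unfold diff_sum; simpl; lra|].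
  set (Z := z0 :: r) in *. set (n := length Z). set (s := cycle_next X z0 Z).
  assert (Hn : (0 < n)%nat) by (unfold n, Z; simpl; lia).
  assert (HnR : 0 < INR n) by (apply lt_0_INR, Hn).
  assert (Hper := cycle_next_period X z0 r HZnd).
  set (A := orbit_mean X s n w). set (B := orbit_mean X s n v).
  assert (HAB : ge A B) by (apply ge_orbit_mean; auto).
  assert (HonZ : forall x, In x Z -> A x - B x = diff_sum w v Z / INR n).
  { intros x Hx. unfold A, B, s, n, Z. rewrite !orbit_mean_cycle by assumption.
    rewrite diff_sum_lsum. field. apply not_0_INR. simpl. lia. }
  assert (HoffZ : forall x, ~ In x Z -> A x = B x).
  { intros x Hx. unfold A, B.
    rewrite !orbit_mean_fixed by (exact Hn || apply cycle_next_notin, Hx).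
    apply NNPP. intro Hne. apply Hx, HZ, Hne. }
  apply Rnot_lt_ge. intro Hneg.
  assert (Hgap : diff_sum w v Z / INR n < 0) by (apply Rdiv_neg_pos; assumption).
  assert (HBA : strictly ge B A).
  { apply HSP; try (apply in_WF_mean; intro k; apply in_WF_perm_act; assumption).
    - intro x. destruct (classic (In x Z)) as [Hx|Hx].
      + specialize (HonZ x Hx). lra.
      + rewrite (HoffZ x Hx). lra.
    - exists z0. specialize (HonZ z0 (in_eq z0 r)). lra. }
  exact (proj2 HBA HAB).
Qed.
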